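(* Let $a>0$, $k_p,k_d>0$, $z_0=x_0+iy_0\in\mathbb{C}$, $N>\rho>0$, and let $A_{\rho,N}=\{(\ell_1,\ell_2)\in\mathbb{Z}^2:\rho a<|z_{\ell_1,\ell_2}|<Na\}$ where $z_{\ell_1,\ell_2}=(\ell_1a-x_0)+i(\ell_2a-y_0)$. With $\epsilon^{(i)},\epsilon^{(\pm)},\Delta^{(i)},\Delta^{d(i,\pm)},\Delta^{d(\pm)}$ as defined in the context, define for each $(\ell_1,\ell_2)$ $$F(\ell_1,\ell_2)=\tfrac12k_p\big((\Delta^{(1)})^2+(\Delta^{(2)})^2\big)+\tfrac12k_d\big((\Delta^{d(1,+)})^2+(\Delta^{d(2,+)})^2+(\Delta^{d(1,-)})^2+(\Delta^{d(2,-)})^2+(\Delta^{d(+)})^2+(\Delta^{d(-)})^2\big)$$ and the elastic energy $E_{\rho,N}(x_0,y_0)=\sum_{(\ell_1,\ell_2)\in A_{\rho,N}}F(\ell_1,\ell_2)$. Define the truncated Epstein–Hurwitz zeta value $$\zeta_{\rho,N}(2,-z_0/a)=\sum_{(\ell_1,\ell_2)\in A_{\rho,N}}\frac{1}{(\ell_1-x_0/a)^2+(\ell_2-y_0/a)^2}.$$ Then $$E_{\rho,N}(x_0,y_0)=\frac{1}{8\pi^2}k_da^2\,\zeta_{\rho,N}(2,-z_0/a)+\sum_{(\ell_1,\ell_2)\in A_{\rho,N}}r(\ell_1,\ell_2),$$ where $r(\ell_1,\ell_2)=F(\ell_1,\ell_2)-\frac{k_d}{8\pi^2}\frac{a^4}{|z_{\ell_1,\ell_2}|^2}$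 satisfies $r(\ell_1,\ell_2)\,|z_{\ell_1,\ell_2}|^2/a^2\to0$ as $|z_{\ell_1,\ell_2}|\to\infty$ (with $a,x_0,y_0,k_p,k_d$ fixed); i.e. up to terms of higher order in $a^2/|z_{\ell_1,\ell_2}|^2$ the energy equals $\frac{1}{8\pi^2}k_da^2\zeta_{\rho,N}(2,-z_0/a)$.
   Context: Notation for a single screw dislocation in the simple cubic lattice with spacing $a$: $s(\ell_1,\ell_2)=z_{\ell_1,\ell_2}/|z_{\ell_1,\ell_2}|$; $\epsilon^{(1)}=\frac{a}{2\pi}\operatorname{Arg}\frac{s(\ell_1+1,\ell_2)}{s(\ell_1,\ell_2)}$, $\epsilon^{(2)}=\frac{a}{2\pi}\operatorname{Arg}\frac{s(\ell_1,\ell_2+1)}{s(\ell_1,\ell_2)}$, $\epsilon^{(\pm)}=\frac{a}{2\pi}\operatorname{Arg}\frac{s(\ell_1+1,\ell_2\pm1)}{s(\ell_1,\ell_2)}$ with $\operatorname{Arg}$ the principal argument in $(-\pi,\pi]$; for $i=1,2$: $\Delta^{(i)}=\sqrt{a^2+(\epsilon^{(i)})^2}-a$, $\Delta^{d(i,\pm)}=\sqrt{(a\pm\epsilon^{(i)})^2+a^2}-\sqrt2a$, $\Delta^{d(\pm)}=\sqrt{2a^2+(\epsilon^{(\pm)})^2}-\sqrt2a$ (all evaluated at $(\ell_1,\ell_2)$). $k_p$ and $k_d$ are the spring constants of the axis-parallel and diagonal springs respectively; the vertical springs have zero length change. *)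

From Stdlib Require Import Reals ZArith.
Open Scope R_scope.

(* Principal argument of the complex number x + i y, in (-PI, PI];
   convention Arg 0 = 0 (never used in the statement for nonzero values). *)
Definition Arg (x y : R) : R :=
  if Rlt_dec 0 x then atan (y / x)
  else if Rlt_dec x 0 then
    (if Rle_dec 0 y then atan (y / x) + PI else atan (y / x) - PI)
  else if Rlt_dec 0 y then PI / 2
  else if Rlt_dec y 0 then - (PI / 2)
  else 0.

Definition cdiv_re (u1 u2 v1 v2 : R) : R := (u1 * v1 + u2 * v2) / (v1 ^ 2 + v2 ^ 2).
Definition cdiv_im (u1 u2 v1 v2 : R) : R := (u2 * v1 - u1 * v2) / (v1 ^ 2 + v2 ^ 2).

Definition zre (a x0 : R) (l1 : Z) : R := IZR l1 * a - x0.
Definition zim (a y0 : R) (l2 : Z) : R := IZR l2 * a - y0.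
Definition modz (a x0 y0 : R) (l1 l2 : Z) : R :=
  sqrt (zre a x0 l1 ^ 2 + zim a y0 l2 ^ 2).

Definition sre (a x0 y0 : R) (l1 l2 : Z) : R := zre a x0 l1 / modz a x0 y0 l1 l2.
Definition sim (a x0 y0 : R) (l1 l2 : Z) : R := zim a y0 l2 / modz a x0 y0 l1 l2.

Definition epsgen (a x0 y0 : R) (m1 m2 l1 l2 : Z) : R :=
  a / (2 * PI) *
  Arg (cdiv_re (sre a x0 y0 m1 m2) (sim a x0 y0 m1 m2) (sre a x0 y0 l1 l2) (sim a x0 y0 l1 l2))
      (cdiv_im (sre a x0 y0 m1 m2) (sim a x0 y0 m1 m2) (sre a x0 y0 l1 l2) (sim a x0 y0 l1 l2)).

Definition eps1 a x0 y0 l1 l2 := epsgen a x0 y0 (l1 + 1)%Z l2 l1 l2.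
Definition eps2 a x0 y0 l1 l2 := epsgen a x0 y0 l1 (l2 + 1)%Z l1 l2.
Definition epsp a x0 y0 l1 l2 := epsgen a x0 y0 (l1 + 1)%Z (l2 + 1)%Z l1 l2.
Definition epsm a x0 y0 l1 l2 := epsgen a x0 y0 (l1 + 1)%Z (l2 - 1)%Z l1 l2.

Definition Dax (a e : R) : R := sqrt (a ^ 2 + e ^ 2) - a.
Definition Ddp (a e : R) : R := sqrt ((a + e) ^ 2 + a ^ 2) - sqrt 2 * a.
Definition Ddm (a e : R) : R := sqrt ((a - e) ^ 2 + a ^ 2) - sqrt 2 * a.
Definition Ddd (a e : R) : R := sqrt (2 * a ^ 2 + e ^ 2) - sqrt 2 * a.

Definition F (a kp kd x0 y0 : R) (l1 l2 : Z) : R :=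
  let e1 := eps1 a x0 y0 l1 l2 in
  let e2 := eps2 a x0 y0 l1 l2 in
  let ep := epsp a x0 y0 l1 l2 in
  let em := epsm a x0 y0 l1 l2 in
  1 / 2 * kp * (Dax a e1 ^ 2 + Dax a e2 ^ 2)
  + 1 / 2 * kd * (Ddp a e1 ^ 2 + Ddp a e2 ^ 2 + Ddm a e1 ^ 2 + Ddm a e2 ^ 2
                  + Ddd a ep ^ 2 + Ddd a em ^ 2).

Definition r (a kp kd x0 y0 : R) (l1 l2 : Z) : R :=
  F a kp kd x0 y0 l1 l2 - kd / (8 * PI ^ 2) * (a ^ 4 / modz a x0 y0 l1 l2 ^ 2).

Definition inA (a x0 y0 rho N : R) (l1 l2 : Z) : bool :=
  if Rlt_dec (rho * a) (modz a x0 y0 l1 l2) then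
    if Rlt_dec (modz a x0 y0 l1 l2) (N * a) then true else false
  else false.

Fixpoint sumZ (f : Z -> R) (m : Z) (n : nat) : R :=
  match n with
  | O => 0
  | S k => f m + sumZ f (m + 1)%Z k
  end.

(* Sum over the finite set A_{rho,N}: summing the indicator-weighted terms over a
   box of integers which contains A_{rho,N} (for a > 0): indices l with
   |l a - c| < N a lie in (c/a - N, c/a + N), which is contained in
   [up(c/a - N) - 1, up(c/a - N) - 1 + 2 up(N) + 1]. *)
Definition boxlo (a c N : R) : Z := (up (c / a - N) - 1)%Z.
Definition boxlen (N : R) : nat := Z.to_nat (2 * up N + 2).

Definition sumA (a x0 y0 rho N : R) (f : Z -> Z -> R) : R :=
  sumZ (fun l1 =>
          sumZ (fun l2 => if inA a x0 y0 rho N l1 l2 then f l1 l2 else 0)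
               (boxlo a y0 N) (boxlen N))
       (boxlo a x0 N) (boxlen N).

Definition E (a kp kd x0 y0 rho N : R) : R := sumA a x0 y0 rho N (F a kp kd x0 y0).

Definition zeta (a x0 y0 rho N : R) : R :=
  sumA a x0 y0 rho N
    (fun l1 l2 => 1 / ((IZR l1 - x0 / a) ^ 2 + (IZR l2 - y0 / a) ^ 2)).

(* Put t = a / |z| and assume |z| >= 4 a. The offset eps of a bond is (a / 2 PI) atan u, where
   u = O(t) is the tangent of the angle by which z / |z| turns along the bond, so eps = O(a t).
   Every spring length change is then O(eps^2 / a), except the diagonal ones, which are
   +- eps / sqrt 2 to first order; their squares add up to eps^2 + O(eps^4 / a^2). Hence
   F = (kd / 2) (eps1^2 + eps2^2) + O(a^2 t^4). For the two axis bonds u1^2 + u2^2 = t^2 + O(t^3),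
   so F = kd a^2 t^2 / (8 PI^2) + O(a^2 t^3), and r |z|^2 / a^2 = r / t^2 = O(a^2 t) -> 0.
   The decomposition of E is termwise, the summand of zeta being a^2 / |z|^2. *)

From Pilot Require Import Defs.
From Stdlib Require Import Reals Lra.
Open Scope R_scope.

Lemma Rabs_le_inv x b : Rabs x <= b -> - b <= x <= b.
Proof. pose proof (Rle_abs x); pose proof (Rle_abs (- x)); rewrite Rabs_Ropp in *; lra. Qed.

Lemma atan_eq_mul u : exists k, 0 < k <= 1 /\ 1 - u ^ 2 <= k /\ atan u = k * u.
Proof.
  assert (Hpos : forall v, 0 < v -> exists k, 0 < k <= 1 /\ 1 - v ^ 2 <= k /\ atan v = k * v).
  { intros v Hv.
    destruct (MVT_cor2 atan (fun x => / (1 + x ^ 2)) 0 v Hv) as [c [Hc Hcv]].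
    { intros c _; apply derivable_pt_lim_atan. }
    rewrite atan_0, !Rminus_0_r in Hc.
    exists (/ (1 + c ^ 2)); split; [|split; [|exact Hc]].
    - split; [apply Rinv_0_lt_compat; nra|].
      rewrite <- Rinv_1; apply Rinv_le_contravar; nra.
    - assert (Hk : / (1 + c ^ 2) = 1 - c ^ 2 / (1 + c ^ 2)) by (field; nra).
      assert (c ^ 2 / (1 + c ^ 2) <= c ^ 2).
      { apply Rmult_le_reg_r with (1 + c ^ 2); [nra|].
        unfold Rdiv; rewrite Rmult_assoc, Rinv_l by nra; nra. }
      nra. }
  destruct (Rtotal_order u 0) as [Hu | [-> | Hu]].
  - destruct (Hpos (- u)) as [k [Hk [Hk' Hatan]]]; [lra|].
    exists k; repeat split; try lra.
    rewrite atan_opp in Hatan; lra.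
  - exists 1; rewrite atan_0; repeat split; lra.
  - exact (Hpos u Hu).
Qed.

Lemma atan_sq_le u : atan u ^ 2 <= u ^ 2.
Proof.
  destruct (atan_eq_mul u) as [k [Hk [_ ->]]].
  rewrite Rpow_mult_distr.
  assert (0 <= u ^ 2) by nra.
  assert (k ^ 2 <= 1) by nra.
  nra.
Qed.

Lemma atan_sq_approx u : Rabs (atan u ^ 2 - u ^ 2) <= 2 * u ^ 4.
Proof.
  destruct (atan_eq_mul u) as [k [Hk [Hk' ->]]].
  replace ((k * u) ^ 2 - u ^ 2) with (- ((1 - k) * (1 + k)) * u ^ 2) by ring.
  assert (0 <= u ^ 2) by nra.
  assert (0 <= (1 - k) * (1 + k) <= 2 * u ^ 2) by nra.
  apply Rabs_le; split; nra.
Qed.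

Lemma Rabs_sub_le_sq_sub c s : 0 < c -> 0 <= s -> Rabs (s - c) <= Rabs (s ^ 2 - c ^ 2) / c.
Proof.
  intros Hc Hs.
  replace (s ^ 2 - c ^ 2) with ((s - c) * (s + c)) by ring.
  rewrite Rabs_mult, (Rabs_pos_eq (s + c)) by lra.
  apply Rmult_le_reg_r with c; [exact Hc|].
  unfold Rdiv; rewrite Rmult_assoc, Rinv_l, Rmult_1_r by lra.
  pose proof (Rabs_pos (s - c)); nra.
Qed.

Lemma sqrt_add_sub_sq_le c h : 0 < c -> 0 <= h -> (sqrt (c ^ 2 + h) - c) ^ 2 <= h ^ 2 / c ^ 2.
Proof.
  intros Hc Hh.
  pose proof (Rabs_sub_le_sq_sub c (sqrt (c ^ 2 + h)) Hc (sqrt_pos _)) as Hd.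
  rewrite pow2_sqrt, Rplus_minus_l, (Rabs_pos_eq h) in Hd by nra.
  rewrite <- pow2_abs.
  replace (h ^ 2 / c ^ 2) with ((h / c) ^ 2) by (field; lra).
  apply pow_incr; split; [apply Rabs_pos | exact Hd].
Qed.

Lemma Dax_sq_le a e : 0 < a -> Dax a e ^ 2 <= e ^ 4 / a ^ 2.
Proof.
  intros Ha. replace (e ^ 4) with ((e ^ 2) ^ 2) by ring.
  apply sqrt_add_sub_sq_le; [exact Ha | nra].
Qed.

Lemma Ddd_sq_le a e : 0 < a -> Ddd a e ^ 2 <= e ^ 4 / a ^ 2.
Proof.
  intros Ha. unfold Ddd.
  assert (Hs : sqrt 2 ^ 2 = 2) by (apply pow2_sqrt; lra).
  replace (2 * a ^ 2 + e ^ 2) with ((sqrt 2 * a) ^ 2 + e ^ 2) by (rewrite Rpow_mult_distr, Hs; ring).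
  eapply Rle_trans.
  { apply sqrt_add_sub_sq_le; [apply Rmult_lt_0_compat; [apply sqrt_lt_R0|]|]; nra. }
  rewrite Rpow_mult_distr, Hs, <- pow_mult.
  apply Rmult_le_compat_l; [nra|].
  apply Rinv_le_contravar; nra.
Qed.

Lemma Ddp_Ddm_sq_approx a e : 0 < a ->
  Rabs (Ddp a e ^ 2 + Ddm a e ^ 2 - e ^ 2) <= e ^ 4 / a ^ 2.
Proof.
  intros Ha. unfold Ddp, Ddm.
  set (P := sqrt ((a + e) ^ 2 + a ^ 2)). set (Q := sqrt ((a - e) ^ 2 + a ^ 2)).
  assert (HP : P ^ 2 = (a + e) ^ 2 + a ^ 2) by (apply pow2_sqrt; nra).
  assert (HQ : Q ^ 2 = (a - e) ^ 2 + a ^ 2) by (apply pow2_sqrt; nra).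
  assert (Hs : sqrt 2 ^ 2 = 2) by (apply pow2_sqrt; lra).
  assert (HP0 : 0 <= P) by apply sqrt_pos.
  assert (HQ0 : 0 <= Q) by apply sqrt_pos.
  assert (Hs0 : 0 <= sqrt 2) by apply sqrt_pos.
  set (U := 8 * a ^ 2 + e ^ 2). set (V := 2 * sqrt 2 * a * (P + Q)).
  assert (HUV : (P - sqrt 2 * a) ^ 2 + (Q - sqrt 2 * a) ^ 2 - e ^ 2 = - (V - U)).
  { unfold U, V. transitivity (P ^ 2 + Q ^ 2 + 2 * sqrt 2 ^ 2 * a ^ 2
      - 2 * sqrt 2 * a * (P + Q) - e ^ 2); [ring|]. rewrite HP, HQ, Hs; ring. }
  set (g := P * Q).
  assert (Hg0 : 0 <= g) by (unfold g; nra).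
  assert (Hgg : g ^ 2 = 4 * a ^ 4 + e ^ 4) by (unfold g; rewrite Rpow_mult_distr, HP, HQ; ring).
  assert (HVV : V ^ 2 - U ^ 2 = 16 * a ^ 2 * g - 32 * a ^ 4 - e ^ 4).
  { unfold V, U. transitivity (4 * sqrt 2 ^ 2 * a ^ 2 * (P ^ 2 + Q ^ 2) + 8 * sqrt 2 ^ 2 * a ^ 2 * g
      - (8 * a ^ 2 + e ^ 2) ^ 2); [unfold g; ring|]. rewrite Hs, HP, HQ; ring. }
  assert (Hfac : (g - 2 * a ^ 2) * (g + 2 * a ^ 2) = e ^ 4) by nra.
  assert (Hg1 : 2 * a ^ 2 <= g) by nra.
  assert (Hg2 : 4 * a ^ 2 * (g - 2 * a ^ 2) <= e ^ 4) by nra.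
  rewrite HUV, Rabs_Ropp.
  eapply Rle_trans; [apply Rabs_sub_le_sq_sub; [unfold U; nra | unfold V; apply Rmult_le_pos; nra]|].
  rewrite HVV.
  apply Rmult_le_reg_r with (U * a ^ 2); [apply Rmult_lt_0_compat; unfold U; nra|].
  replace (Rabs (16 * a ^ 2 * g - 32 * a ^ 4 - e ^ 4) / U * (U * a ^ 2))
    with (Rabs (16 * a ^ 2 * g - 32 * a ^ 4 - e ^ 4) * a ^ 2) by (field; unfold U; nra).
  replace (e ^ 4 / a ^ 2 * (U * a ^ 2)) with (e ^ 4 * U) by (field; nra).
  assert (Habs : Rabs (16 * a ^ 2 * g - 32 * a ^ 4 - e ^ 4) <= 3 * e ^ 4) by (apply Rabs_le; split; nra).
  unfold U; nra.
Qed.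

Definition spring_energy (a kp kd e1 e2 ep em : R) : R :=
  1 / 2 * kp * (Dax a e1 ^ 2 + Dax a e2 ^ 2)
  + 1 / 2 * kd * (Ddp a e1 ^ 2 + Ddp a e2 ^ 2 + Ddm a e1 ^ 2 + Ddm a e2 ^ 2
                  + Ddd a ep ^ 2 + Ddd a em ^ 2).

Lemma quartic_div_sq_le a t e : 0 < a -> e ^ 2 <= a ^ 2 * t ^ 2 -> e ^ 4 / a ^ 2 <= a ^ 2 * t ^ 4.
Proof.
  intros Ha He.
  apply Rmult_le_reg_r with (a ^ 2); [nra|].
  replace (e ^ 4 / a ^ 2 * a ^ 2) with (e ^ 2 * e ^ 2) by (field; lra).
  replace (a ^ 2 * t ^ 4 * a ^ 2) with ((a ^ 2 * t ^ 2) * (a ^ 2 * t ^ 2)) by ring.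
  apply Rmult_le_compat; nra.
Qed.

Lemma spring_energy_quadratic_approx a kp kd t e1 e2 ep em :
  0 < a -> 0 <= kp -> 0 <= kd ->
  e1 ^ 2 <= a ^ 2 * t ^ 2 -> e2 ^ 2 <= a ^ 2 * t ^ 2 ->
  ep ^ 2 <= a ^ 2 * t ^ 2 -> em ^ 2 <= a ^ 2 * t ^ 2 ->
  Rabs (spring_energy a kp kd e1 e2 ep em - kd / 2 * (e1 ^ 2 + e2 ^ 2))
    <= (kp + 2 * kd) * (a ^ 2 * t ^ 4).
Proof.
  intros Ha Hkp Hkd H1 H2 Hp Hm.
  pose proof (quartic_div_sq_le a t e1 Ha H1).
  pose proof (quartic_div_sq_le a t e2 Ha H2).
  pose proof (quartic_div_sq_le a t ep Ha Hp).
  pose proof (quartic_div_sq_le a t em Ha Hm).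
  pose proof (Dax_sq_le a e1 Ha). pose proof (Dax_sq_le a e2 Ha).
  pose proof (Ddd_sq_le a ep Ha). pose proof (Ddd_sq_le a em Ha).
  pose proof (Rabs_le_inv _ _ (Ddp_Ddm_sq_approx a e1 Ha)).
  pose proof (Rabs_le_inv _ _ (Ddp_Ddm_sq_approx a e2 Ha)).
  unfold spring_energy. apply Rabs_le.
  split; nra.
Qed.

(* With (p, q) = a z / |z|^2, this is the tangent of the angle from z to z + a (d1 + i d2). *)
Definition rotation_tan (p q d1 d2 : R) : R := (d2 * p - d1 * q) / (1 + d1 * p + d2 * q).

Definition screw_offset (a p q d1 d2 : R) : R := a / (2 * PI) * atan (rotation_tan p q d1 d2).

Lemma rotation_denom_ge p q d1 d2 :
  p ^ 2 + q ^ 2 <= 1 / 16 -> d1 ^ 2 <= 1 -> d2 ^ 2 <= 1 -> 1 / 2 <= 1 + d1 * p + d2 * q.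
Proof.
  intros Hpq H1 H2.
  assert ((d1 * p + d2 * q) ^ 2 <= 1 / 8).
  { pose proof (pow2_ge_0 (d1 * q - d2 * p)). nra. }
  nra.
Qed.

Lemma rotation_tan_sq_le p q d1 d2 :
  p ^ 2 + q ^ 2 <= 1 / 16 -> d1 ^ 2 <= 1 -> d2 ^ 2 <= 1 ->
  rotation_tan p q d1 d2 ^ 2 <= 8 * (p ^ 2 + q ^ 2).
Proof.
  intros Hpq H1 H2.
  pose proof (rotation_denom_ge p q d1 d2 Hpq H1 H2) as Hden.
  assert (Hnum : (d2 * p - d1 * q) ^ 2 <= 2 * (p ^ 2 + q ^ 2)).
  { pose proof (pow2_ge_0 (d2 * q + d1 * p)). nra. }
  unfold rotation_tan.
  replace (((d2 * p - d1 * q) / (1 + d1 * p + d2 * q)) ^ 2)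
    with ((d2 * p - d1 * q) ^ 2 / (1 + d1 * p + d2 * q) ^ 2) by (field; lra).
  apply Rmult_le_reg_r with ((1 + d1 * p + d2 * q) ^ 2); [nra|].
  unfold Rdiv; rewrite Rmult_assoc, Rinv_l, Rmult_1_r by nra.
  assert (1 / 4 <= (1 + d1 * p + d2 * q) ^ 2) by nra.
  assert (0 <= p ^ 2 + q ^ 2) by nra.
  nra.
Qed.

Lemma inv_sq_sub_one_le p t : p ^ 2 <= t ^ 2 -> 0 <= t <= 1 / 4 ->
  Rabs (/ (1 + p) ^ 2 - 1) <= 4 * t.
Proof.
  intros Hp Ht.
  assert (Hpt : - t <= p <= t) by nra.
  set (y := / (1 + p) ^ 2 - 1).
  assert (Hy : y * (1 + p) ^ 2 = - (p * (2 + p))) by (unfold y; field; lra).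
  assert (HD : 9 / 16 <= (1 + p) ^ 2) by nra.
  assert (Hnum : - (9 / 4 * t) <= p * (2 + p) <= 9 / 4 * t) by nra.
  apply Rabs_le; split; nra.
Qed.

Lemma axis_rotation_tan_sq_approx p q t : 0 <= t <= 1 / 4 -> p ^ 2 + q ^ 2 = t ^ 2 ->
  Rabs (rotation_tan p q 1 0 ^ 2 + rotation_tan p q 0 1 ^ 2 - t ^ 2) <= 4 * t ^ 3.
Proof.
  intros Ht Hpq.
  assert (Hp : p ^ 2 <= t ^ 2) by nra. assert (Hq : q ^ 2 <= t ^ 2) by nra.
  pose proof (Rabs_le_inv _ _ (inv_sq_sub_one_le p t Hp Ht)).
  pose proof (Rabs_le_inv _ _ (inv_sq_sub_one_le q t Hq Ht)).
  replace (rotation_tan p q 1 0 ^ 2 + rotation_tan p q 0 1 ^ 2 - t ^ 2)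
    with (q ^ 2 * (/ (1 + p) ^ 2 - 1) + p ^ 2 * (/ (1 + q) ^ 2 - 1)).
  2: { rewrite <- Hpq. unfold rotation_tan. field. split; nra. }
  apply Rabs_le; nra.
Qed.

Lemma screw_offset_sq_le a p q t d1 d2 :
  0 <= t <= 1 / 4 -> p ^ 2 + q ^ 2 = t ^ 2 -> d1 ^ 2 <= 1 -> d2 ^ 2 <= 1 ->
  screw_offset a p q d1 d2 ^ 2 <= a ^ 2 * t ^ 2.
Proof.
  intros Ht Hpq H1 H2.
  pose proof (rotation_tan_sq_le p q d1 d2 ltac:(nra) H1 H2) as Hu.
  pose proof (atan_sq_le (rotation_tan p q d1 d2)) as Hatan.
  pose proof PI2_3_2 as HPI.
  apply Rmult_le_reg_r with ((2 * PI) ^ 2); [nra|].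
  replace (screw_offset a p q d1 d2 ^ 2 * (2 * PI) ^ 2)
    with (a ^ 2 * atan (rotation_tan p q d1 d2) ^ 2) by (unfold screw_offset; field; lra).
  rewrite Hpq in Hu.
  apply Rle_trans with (a ^ 2 * t ^ 2 * 8).
  - replace (a ^ 2 * t ^ 2 * 8) with (a ^ 2 * (8 * t ^ 2)) by ring.
    apply Rmult_le_compat_l; [nra | lra].
  - apply Rmult_le_compat_l; nra.
Qed.

(* The source of the leading term [kd a^4 / (8 PI^2 |z|^2)]. *)
Lemma axis_screw_offset_sq_approx a p q t : 0 <= t <= 1 / 4 -> p ^ 2 + q ^ 2 = t ^ 2 ->
  Rabs (screw_offset a p q 1 0 ^ 2 + screw_offset a p q 0 1 ^ 2 - a ^ 2 / (4 * PI ^ 2) * t ^ 2)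
    <= 2 * a ^ 2 * t ^ 3.
Proof.
  intros Ht Hpq.
  pose proof PI2_3_2 as HPI.
  set (u1 := rotation_tan p q 1 0). set (u2 := rotation_tan p q 0 1).
  assert (Hu1 : u1 ^ 2 <= 8 * t ^ 2) by (rewrite <- Hpq; apply rotation_tan_sq_le; nra).
  assert (Hu2 : u2 ^ 2 <= 8 * t ^ 2) by (rewrite <- Hpq; apply rotation_tan_sq_le; nra).
  pose proof (Rabs_le_inv _ _ (atan_sq_approx u1)).
  pose proof (Rabs_le_inv _ _ (atan_sq_approx u2)).
  pose proof (Rabs_le_inv _ _ (axis_rotation_tan_sq_approx p q t Ht Hpq)).
  fold u1 u2 in H1.
  assert (Hsum : - (68 * t ^ 3) <= atan u1 ^ 2 + atan u2 ^ 2 - t ^ 2 <= 68 * t ^ 3).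
  { assert (u1 ^ 4 <= 64 * t ^ 4) by nra. assert (u2 ^ 4 <= 64 * t ^ 4) by nra. nra. }
  set (err := screw_offset a p q 1 0 ^ 2 + screw_offset a p q 0 1 ^ 2 - a ^ 2 / (4 * PI ^ 2) * t ^ 2).
  assert (Herr : err * (4 * PI ^ 2) = a ^ 2 * (atan u1 ^ 2 + atan u2 ^ 2 - t ^ 2))
    by (unfold err, screw_offset; fold u1 u2; field; lra).
  assert (HP : 36 <= 4 * PI ^ 2) by nra.
  assert (Hbound : - (68 * (a ^ 2 * t ^ 3)) <= a ^ 2 * (atan u1 ^ 2 + atan u2 ^ 2 - t ^ 2)
                   <= 68 * (a ^ 2 * t ^ 3)).
  { assert (0 <= a ^ 2) by nra. split; nra. }
  assert (0 <= a ^ 2 * t ^ 3) by (apply Rmult_le_pos; nra).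
  rewrite <- Herr in Hbound.
  apply Rabs_le; split; nra.
Qed.

Lemma spring_energy_screw_approx a kp kd p q t :
  0 < a -> 0 <= kp -> 0 <= kd -> 0 <= t <= 1 / 4 -> p ^ 2 + q ^ 2 = t ^ 2 ->
  Rabs (spring_energy a kp kd (screw_offset a p q 1 0) (screw_offset a p q 0 1)
          (screw_offset a p q 1 1) (screw_offset a p q 1 (-1))
        - kd / (8 * PI ^ 2) * (a ^ 2 * t ^ 2))
    <= (kp + 2 * kd) * (a ^ 2 * t ^ 3).
Proof.
  intros Ha Hkp Hkd Ht Hpq.
  pose proof PI2_3_2 as HPI.
  assert (Hoff : forall d1 d2, d1 ^ 2 <= 1 -> d2 ^ 2 <= 1 ->
            screw_offset a p q d1 d2 ^ 2 <= a ^ 2 * t ^ 2)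
    by (intros; apply screw_offset_sq_le; assumption).
  pose proof (Rabs_le_inv _ _ (spring_energy_quadratic_approx a kp kd t
    (screw_offset a p q 1 0) (screw_offset a p q 0 1)
    (screw_offset a p q 1 1) (screw_offset a p q 1 (-1)) Ha Hkp Hkd
    ltac:(apply Hoff; lra) ltac:(apply Hoff; lra)
    ltac:(apply Hoff; lra) ltac:(apply Hoff; lra))) as Hquad.
  pose proof (Rabs_le_inv _ _ (axis_screw_offset_sq_approx a p q t Ht Hpq)) as Haxis.
  set (S := spring_energy _ _ _ _ _ _ _) in *.
  set (e1 := screw_offset a p q 1 0) in *. set (e2 := screw_offset a p q 0 1) in *.
  replace (kd / (8 * PI ^ 2) * (a ^ 2 * t ^ 2)) with (kd / 2 * (a ^ 2 / (4 * PI ^ 2) * t ^ 2))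
    by (field; lra).
  assert (Hw : 0 <= a ^ 2 * t ^ 3) by (apply Rmult_le_pos; nra).
  assert (Ht4 : a ^ 2 * t ^ 4 <= a ^ 2 * t ^ 3 / 4) by nra.
  assert (Hkt : (kp + 2 * kd) * (a ^ 2 * t ^ 4) <= (kp + 2 * kd) * (a ^ 2 * t ^ 3 / 4))
    by (apply Rmult_le_compat_l; lra).
  assert (Hkd2 : - (kd * (a ^ 2 * t ^ 3)) <= kd / 2 * (e1 ^ 2 + e2 ^ 2 - a ^ 2 / (4 * PI ^ 2) * t ^ 2)
                 <= kd * (a ^ 2 * t ^ 3)) by (split; nra).
  apply Rabs_le; split; nra.
Qed.

Lemma Arg_pos_re x y : 0 < x -> Arg x y = atan (y / x).
Proof. intros Hx; unfold Arg; destruct (Rlt_dec 0 x); [reflexivity | lra]. Qed.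

Lemma modz_sq a x0 y0 l1 l2 : modz a x0 y0 l1 l2 ^ 2 = zre a x0 l1 ^ 2 + zim a y0 l2 ^ 2.
Proof. apply pow2_sqrt; nra. Qed.

(* The ratio s(m)/s(l) of unit vectors has the direction of conj(z_l) z_m. *)
Lemma epsgen_atan a x0 y0 m1 m2 l1 l2 :
  0 < modz a x0 y0 l1 l2 ->
  0 < zre a x0 l1 * zre a x0 m1 + zim a y0 l2 * zim a y0 m2 ->
  epsgen a x0 y0 m1 m2 l1 l2 =
  a / (2 * PI) * atan ((zre a x0 l1 * zim a y0 m2 - zim a y0 l2 * zre a x0 m1)
                       / (zre a x0 l1 * zre a x0 m1 + zim a y0 l2 * zim a y0 m2)).
Proof.
  intros HR Hdot.
  pose proof (modz_sq a x0 y0 l1 l2) as HRR. pose proof (modz_sq a x0 y0 m1 m2) as HRm.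
  assert (HRm0 : 0 <= modz a x0 y0 m1 m2) by apply sqrt_pos.
  unfold epsgen, cdiv_re, cdiv_im, sre, sim.
  revert HR Hdot HRR HRm HRm0.
  generalize (modz a x0 y0 l1 l2) (modz a x0 y0 m1 m2) (zre a x0 l1) (zim a y0 l2)
    (zre a x0 m1) (zim a y0 m2).
  intros R R' X Y X' Y' HR Hdot HRR HRm HRm0.
  assert (HCS : (X * X' + Y * Y') ^ 2 <= R ^ 2 * R' ^ 2) by (rewrite HRR, HRm; pose proof (pow2_ge_0 (X * Y' - Y * X')); nra).
  assert (HR' : 0 < R').
  { destruct (Rle_lt_dec R' 0) as [H|H]; [|exact H].
    replace R' with 0 in HCS by lra. nra. }
  assert (Hunit : (X / R) ^ 2 + (Y / R) ^ 2 = 1) by (field_simplify_eq; lra).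
  rewrite Hunit, Arg_pos_re.
  - f_equal; f_equal; field; repeat split; nra.
  - replace ((X' / R' * (X / R) + Y' / R' * (Y / R)) / 1) with ((X * X' + Y * Y') / (R * R'))
      by (field; lra).
    apply Rdiv_lt_0_compat; nra.
Qed.

Lemma ratio_le_quarter a R : 0 < a -> 4 * a <= R -> 0 <= a / R <= 1 / 4.
Proof.
  intros Ha HR. split; [apply Rlt_le, Rdiv_lt_0_compat; lra|].
  apply Rmult_le_reg_r with R; [lra|]. field_simplify; lra.
Qed.

Lemma scaled_z_sq a x0 y0 l1 l2 : 0 < modz a x0 y0 l1 l2 ->
  (a * zre a x0 l1 / modz a x0 y0 l1 l2 ^ 2) ^ 2 + (a * zim a y0 l2 / modz a x0 y0 l1 l2 ^ 2) ^ 2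
  = (a / modz a x0 y0 l1 l2) ^ 2.
Proof.
  intros HR.
  replace ((a * zre a x0 l1 / modz a x0 y0 l1 l2 ^ 2) ^ 2
           + (a * zim a y0 l2 / modz a x0 y0 l1 l2 ^ 2) ^ 2)
    with (a ^ 2 * (zre a x0 l1 ^ 2 + zim a y0 l2 ^ 2) / modz a x0 y0 l1 l2 ^ 4) by (field; lra).
  rewrite <- modz_sq. field. lra.
Qed.

Lemma epsgen_screw_offset a x0 y0 l1 l2 m1 m2 d1 d2 :
  0 < a -> 4 * a <= modz a x0 y0 l1 l2 -> d1 ^ 2 <= 1 -> d2 ^ 2 <= 1 ->
  zre a x0 m1 = zre a x0 l1 + d1 * a -> zim a y0 m2 = zim a y0 l2 + d2 * a ->
  epsgen a x0 y0 m1 m2 l1 l2 =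
  screw_offset a (a * zre a x0 l1 / modz a x0 y0 l1 l2 ^ 2)
                 (a * zim a y0 l2 / modz a x0 y0 l1 l2 ^ 2) d1 d2.
Proof.
  intros Ha HR H1 H2 Hm1 Hm2.
  pose proof (modz_sq a x0 y0 l1 l2) as HRR.
  pose proof (scaled_z_sq a x0 y0 l1 l2 ltac:(lra)) as Hpq.
  pose proof (ratio_le_quarter a _ Ha HR) as Ht.
  set (R := modz a x0 y0 l1 l2) in *.
  set (X := zre a x0 l1) in *. set (Y := zim a y0 l2) in *.
  set (p := a * X / R ^ 2) in *. set (q := a * Y / R ^ 2) in *.
  assert (Hden : 1 / 2 <= 1 + d1 * p + d2 * q) by (apply rotation_denom_ge; nra).
  assert (Hdot : X * zre a x0 m1 + Y * zim a y0 m2 = R ^ 2 * (1 + d1 * p + d2 * q)).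
  { replace (R ^ 2 * (1 + d1 * p + d2 * q)) with (R ^ 2 + d1 * a * X + d2 * a * Y)
      by (unfold p, q; field; nra).
    rewrite Hm1, Hm2, HRR; ring. }
  rewrite epsgen_atan; fold R X Y; [|lra | rewrite Hdot; apply Rmult_lt_0_compat; nra].
  unfold screw_offset, rotation_tan. rewrite Hdot, Hm1, Hm2.
  f_equal; f_equal. unfold p, q. field. nra.
Qed.

Lemma F_spring_energy a kp kd x0 y0 l1 l2 :
  F a kp kd x0 y0 l1 l2 =
  spring_energy a kp kd (Defs.eps1 a x0 y0 l1 l2) (Defs.eps2 a x0 y0 l1 l2)
    (epsp a x0 y0 l1 l2) (epsm a x0 y0 l1 l2).
Proof. reflexivity. Qed.

Lemma r_abs_le a kp kd x0 y0 l1 l2 :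
  0 < a -> 0 <= kp -> 0 <= kd -> 4 * a <= modz a x0 y0 l1 l2 ->
  Rabs (r a kp kd x0 y0 l1 l2) <= (kp + 2 * kd) * (a ^ 2 * (a / modz a x0 y0 l1 l2) ^ 3).
Proof.
  intros Ha Hkp Hkd HR.
  assert (Hx : zre a x0 (l1 + 1) = zre a x0 l1 + 1 * a) by (unfold zre; rewrite plus_IZR; ring).
  assert (Hy : zim a y0 (l2 + 1) = zim a y0 l2 + 1 * a) by (unfold zim; rewrite plus_IZR; ring).
  assert (Hy' : zim a y0 (l2 - 1) = zim a y0 l2 + -1 * a) by (unfold zim; rewrite minus_IZR; ring).
  assert (Hx0 : zre a x0 l1 = zre a x0 l1 + 0 * a) by ring.
  assert (Hy0 : zim a y0 l2 = zim a y0 l2 + 0 * a) by ring.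
  unfold r. rewrite F_spring_energy. unfold Defs.eps1, Defs.eps2, epsp, epsm.
  rewrite (epsgen_screw_offset _ _ _ _ _ _ _ 1 0 Ha HR ltac:(lra) ltac:(lra) Hx Hy0),
    (epsgen_screw_offset _ _ _ _ _ _ _ 0 1 Ha HR ltac:(lra) ltac:(lra) Hx0 Hy),
    (epsgen_screw_offset _ _ _ _ _ _ _ 1 1 Ha HR ltac:(lra) ltac:(lra) Hx Hy),
    (epsgen_screw_offset _ _ _ _ _ _ _ 1 (-1) Ha HR ltac:(lra) ltac:(lra) Hx Hy').
  replace (a ^ 4 / modz a x0 y0 l1 l2 ^ 2) with (a ^ 2 * (a / modz a x0 y0 l1 l2) ^ 2)
    by (field; lra).
  apply spring_energy_screw_approx; try assumption.
  - exact (ratio_le_quarter a _ Ha HR).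
  - apply scaled_z_sq; lra.
Qed.

Lemma r_scaled_abs_le a kp kd x0 y0 l1 l2 :
  0 < a -> 0 <= kp -> 0 <= kd -> 4 * a <= modz a x0 y0 l1 l2 ->
  Rabs (r a kp kd x0 y0 l1 l2 * modz a x0 y0 l1 l2 ^ 2 / a ^ 2)
    <= (kp + 2 * kd) * a ^ 3 / modz a x0 y0 l1 l2.
Proof.
  intros Ha Hkp Hkd HR.
  pose proof (r_abs_le a kp kd x0 y0 l1 l2 Ha Hkp Hkd HR) as Hr.
  set (R := modz a x0 y0 l1 l2) in *.
  assert (Hs : 0 < R ^ 2 / a ^ 2) by (apply Rdiv_lt_0_compat; apply pow_lt; lra).
  unfold Rdiv at 1. rewrite Rmult_assoc, Rabs_mult, (Rabs_pos_eq (R ^ 2 * / a ^ 2)) by lra.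
  replace ((kp + 2 * kd) * a ^ 3 / R)
    with ((kp + 2 * kd) * (a ^ 2 * (a / R) ^ 3) * (R ^ 2 / a ^ 2)) by (field; lra).
  apply Rmult_le_compat_r; lra.
Qed.

Lemma r_scaled_tends_to_zero a kp kd x0 y0 :
  0 < a -> 0 <= kp -> 0 <= kd ->
  forall eta : R, 0 < eta ->
  exists M : R, forall l1 l2 : Z,
    M < modz a x0 y0 l1 l2 ->
    Rabs (r a kp kd x0 y0 l1 l2 * modz a x0 y0 l1 l2 ^ 2 / a ^ 2) < eta.
Proof.
  intros Ha Hkp Hkd eta Heta.
  set (C := (kp + 2 * kd) * a ^ 3).
  assert (HC : 0 <= C) by (unfold C; apply Rmult_le_pos; [lra | apply pow_le; lra]).
  exists (Rmax (4 * a) (C / eta)). intros l1 l2 HM.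
  pose proof (Rmax_l (4 * a) (C / eta)). pose proof (Rmax_r (4 * a) (C / eta)).
  eapply Rle_lt_trans; [apply r_scaled_abs_le; lra|].
  fold C. set (R := modz a x0 y0 l1 l2) in *.
  apply Rmult_lt_reg_r with R; [lra|].
  replace (C / R * R) with C by (field; lra).
  apply Rmult_lt_reg_r with (/ eta); [apply Rinv_0_lt_compat; lra|].
  replace (eta * R * / eta) with R by (field; lra). lra.
Qed.

Lemma sumZ_linear (f g h : Z -> R) c m n :
  (forall l, f l = c * g l + h l) -> sumZ f m n = c * sumZ g m n + sumZ h m n.
Proof.
  intros Hfgh. revert m. induction n as [|n IH]; intros m; simpl; [ring|].
  rewrite Hfgh, IH. ring.
Qed.

Lemma sumA_linear a x0 y0 rho N (f g h : Z -> Z -> R) c :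
  (forall l1 l2, f l1 l2 = c * g l1 l2 + h l1 l2) ->
  sumA a x0 y0 rho N f = c * sumA a x0 y0 rho N g + sumA a x0 y0 rho N h.
Proof.
  intros Hfgh. apply sumZ_linear; intros l1. apply sumZ_linear; intros l2.
  destruct (inA a x0 y0 rho N l1 l2); [apply Hfgh | ring].
Qed.

(* This holds also at [z = 0], where both [1 / 0] and [a^4 / 0] are [0]. *)
Lemma F_zeta_split a kp kd x0 y0 l1 l2 : a <> 0 ->
  F a kp kd x0 y0 l1 l2 =
  1 / (8 * PI ^ 2) * kd * a ^ 2 * (1 / ((IZR l1 - x0 / a) ^ 2 + (IZR l2 - y0 / a) ^ 2))
  + r a kp kd x0 y0 l1 l2.
Proof.
  intros Ha. unfold r. rewrite modz_sq.
  replace ((IZR l1 - x0 / a) ^ 2 + (IZR l2 - y0 / a) ^ 2)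
    with ((zre a x0 l1 ^ 2 + zim a y0 l2 ^ 2) / a ^ 2) by (unfold zre, zim; field; exact Ha).
  rewrite !Rdiv_1_l, Rinv_div. unfold Rdiv. ring.
Qed.

Theorem theorem5p2 (a kp kd x0 y0 rho N : R)
  (ha : 0 < a) (hkp : 0 < kp) (hkd : 0 < kd) (hrho : 0 < rho) (hN : rho < N) :
  E a kp kd x0 y0 rho N
    = 1 / (8 * PI ^ 2) * kd * a ^ 2 * zeta a x0 y0 rho N
      + sumA a x0 y0 rho N (r a kp kd x0 y0)
  /\
  (forall eta : R, 0 < eta ->
     exists M : R, forall l1 l2 : Z,
       M < modz a x0 y0 l1 l2 ->
       Rabs (r a kp kd x0 y0 l1 l2 * modz a x0 y0 l1 l2 ^ 2 / a ^ 2) < eta).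
Proof.
  split.
  - apply sumA_linear; intros l1 l2. apply F_zeta_split; lra.
  - apply r_scaled_tends_to_zero; lra.
Qed.
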